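(* For every trie $\mathcal T$ with $n$ nodes and every integer $k\ge0$, $n\mathcal H_k(\mathcal T)\le (n-1)\mathcal H^{label}_k(\mathcal T)+1.443n$.
   Context: A trie over a finite totally ordered alphabet $\Sigma$ is a rooted ordered tree with edges labeled by symbols of $\Sigma$ such that edges leaving the same node have distinct labels and siblings are ordered by their incoming labels. For node $u$: $out(u)$ is the set of labels of edges leaving $u$; $\lambda(u)$ is the label of the edge entering $u$, with $\lambda(\text{root})=\#\notin\Sigma$; $\pi(u)$ is the parent, $\pi(\text{root})=\text{root}$; $\lambda_0(u)=\epsilon$, $\lambda_k(u)=\lambda_{k-1}(\pi(u))\cdot\lambda(u)$. For a length-$k$ string $w$ and $c\in\Sigma$: $n_w=|\{u:\lambda_k(u)=w\}|$, $n_{w,c}=|\{u:\lambda_k(u)=w,\ c\in out(u)\}|$. Logs base 2, $0\log(x/0)=0$. $\mathcal H_k(\mathcal T)=\sum_{w}\sum_{c\in\Sigma}\left[\frac{n_{w,c}}{n}\log\frac{n_w}{n_{w,c}}+\frac{n_w-n_{w,c}}{n}\log\frac{n_w}{n_w-n_{w,c}}\right]$ over contexts $w$ with $n_w>0$. For a string $X$ of length $\ell>0$ with $\ell_c$ occurrences of $c$, $\mathcal H_0(X)=\sum_c\frac{\ell_c}{\ell}\log\frac{\ell}{\ell_c}$ (and $0$ for the empty string). For a length-$k$ context $w$, $cover(w)$ is the string obtained by concatenating (in any order) the labels of all edges leaving nodes $u$ with $\lambda_k(u)=w$. The label entropy is defined by $(n-1)\mathcal H^{label}_k(\mathcal T)=\sum_w|cover(w)|\,\mathcal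 H_0(cover(w))$. *)

From HB Require Import structures.
From mathcomp Require Import all_boot all_order all_algebra.
From mathcomp Require Import reals exp.
Set Implicit Arguments. Unset Strict Implicit. Unset Printing Implicit Defensive.
Import Order.TTheory GRing.Theory Num.Theory.
Local Open Scope ring_scope.

(* A trie over the finite alphabet Sigma is represented by its set of nodes,
   each node being identified with the string of edge labels on the path from
   the root to it.  Children of u are the nodes rcons u c; distinct outgoing edges
   automatically have distinct labels; sibling order plays no role below. *)
Record trie (Sigma : finType) := Trie {
  nodes : seq (seq Sigma);
  nodes_uniq : uniq nodes;
  root_in : [::] \in nodes;
  parent_in : forall (s : seq Sigma) (c : Sigma), rcons s c \in nodes -> s \in nodes
}.

Section TrieEntropy.
Variables (R : realType) (Sigma : finType).

Definition log2 (x : R) : R := ln x / ln 2.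

(* a * log2 (b / a), with the convention 0 * log(x/0) = 0 *)
Definition xlogb (a b : nat) : R :=
  if a == 0%N then 0 else a%:R * log2 (b%:R / a%:R).

Definition out_has (T : trie Sigma) (u : seq Sigma) (c : Sigma) : bool :=
  rcons u c \in nodes T.

(* lambda_k(u) over the extended alphabet option Sigma, None playing the role
   of #: the last k labels of the root path, left-padded with # when the depth
   of u is smaller than k (lambda(root) = #, pi(root) = root). *)
Definition ctx (k : nat) (u : seq Sigma) : seq (option Sigma) :=
  let d := size u in
  if (k <= d)%N then map Some (drop (d - k) u)
  else nseq (k - d) None ++ map Some u.

Definition n_w (T : trie Sigma) k (w : seq (option Sigma)) : nat :=
  count (fun u => ctx k u == w) (nodes T).

Definition n_wc (T : trie Sigma) k (w : seq (option Sigma)) (c : Sigma) : nat :=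
  count (fun u => (ctx k u == w) && out_has T u c) (nodes T).

Definition contexts (T : trie Sigma) k : seq (seq (option Sigma)) :=
  undup (map (ctx k) (nodes T)).

Definition Hk (T : trie Sigma) (k : nat) : R :=
  let n := size (nodes T) in
  \sum_(w <- contexts T k) \sum_(c : Sigma)
     (xlogb (n_wc T k w c) (n_w T k w) / n%:R
      + xlogb (n_w T k w - n_wc T k w c) (n_w T k w) / n%:R).

Definition H0 (X : seq Sigma) : R :=
  if size X == 0%N then 0
  else \sum_(c : Sigma) xlogb (count_mem c X) (size X) / (size X)%:R.

Definition cover (T : trie Sigma) k (w : seq (option Sigma)) : seq Sigma :=
  flatten [seq [seq c <- enum Sigma | out_has T u c] | u <- nodes T & ctx k u == w].

Definition Hlabel (T : trie Sigma) (k : nat) : R :=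
  (\sum_(w <- contexts T k) (size (cover T k w))%:R * H0 (cover T k w))
  / ((size (nodes T)).-1)%:R.

End TrieEntropy.

(* Fix a context w with N = n_w nodes, of which a_c = n_{w,c} have a c-child,
   and let m = sum_c a_c = |cover(w)|.  The contribution of w to n H_k is
   sum_c a_c log(N/a_c) + (N - a_c) log(N/(N - a_c)).  Splitting
   log(N/a_c) = log(m/a_c) + log(N/m) turns the first sum into
   |cover(w)| H_0(cover(w)) + m log(N/m), and x ln(y/x) <= y - x bounds
   m ln(N/m) by N - m and each (N - a_c) ln(N/(N - a_c)) by a_c.  Hence the
   excess is at most N / ln 2 per context, n / ln 2 in total, and
   1 / ln 2 <= 1.443. *)

From mathcomp Require Import all_boot all_order all_algebra.
From mathcomp Require Import functions reals interval_inference normedtype.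
From mathcomp Require Import sequences exp derive.
From mathcomp Require Import lra.

Set Implicit Arguments.
Unset Strict Implicit.
Unset Printing Implicit Defensive.
Import Order.TTheory GRing.Theory Num.Theory.
Import numFieldNormedType.Exports.
Local Open Scope ring_scope.

Section Logarithm.
Variable R : realType.
Implicit Types x y : R.

(* (2 + y) / (2 - y) is the (1,1) Pade approximant of e^y.  The derivative of
   2 + x - e^x (2 - x) is 1 - e^x (1 - x) >= 0 since 1 - x <= e^-x. *)
Lemma expR_le_pade y : 0 <= y -> expR y * (2 - y) <= 2 + y.
Proof.
move=> y0.
pose g : R -> R := (cst 2 + id) - (@expR R) * (cst 2 - id).
have dg x : is_derive x 1 g ((0 + 1) - (expR x *: (0 - 1) + (2 - x) *: expR x)).
  by apply: is_deriveB; apply: is_deriveM.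
have g_derivable x : derivable g x 1 by have [] := dg x.
have g'E x : 'D_1 g x = (0 + 1) - (expR x *: (0 - 1) + (2 - x) *: expR x).
  exact: derive_val.
have g_mono : g 0 <= g y.
  apply: (ger0_derive1_ndecr (fun x _ => g_derivable x)) => // [x _|].
  - rewrite derive1E g'E /GRing.scale /=.
    have ex_gt0 := expR_gt0 x.
    have : expR x * expR (- x) = 1 by rewrite expRxMexpNx_1.
    have := expR_ge1Dx (- x).
    nra.
  - by apply: derivable_within_continuous => x _; exact: g_derivable.
have gE z : g z = 2 + z - expR z * (2 - z) by [].
by move: g_mono; rewrite !gE expR0; lra.
Qed.

Lemma ln2_gt0 : 0 < ln (2 : R).
Proof. by rewrite ln_gt0 ?ltr1n. Qed.

(* e^(1/101) <= 203/201 by the Pade bound and (203/201)^70 <= 2, so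
   ln 2 >= 70/101 > 1000/1443. *)
Lemma invr_ln2_le : (ln (2 : R))^-1 <= 1443%:R / 1000%:R.
Proof.
set y : R := 101%:R^-1.
have ey : expR y <= 203%:R / 201%:R.
  rewrite ler_pdivlMr ?ltr0n //.
  have := @expR_le_pade y; rewrite /y; lra.
have e70 : expR (70%:R * y) <= 2.
  rewrite expRM_natl; apply: le_trans (lerXn2r _ _ _ ey) _; rewrite ?nnegrE ?expR_ge0 //.
  lra.
have : ln (expR (70%:R * y)) <= ln 2 by rewrite ler_ln ?posrE ?expR_gt0.
rewrite expRK /y => ln2_ge.
have := ln2_gt0; rewrite -[_^-1]mul1r ler_pdivrMr //; lra.
Qed.

Lemma mul_ln_div_le x y : 0 <= x -> 0 < y -> x * ln (y / x) <= y - x.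
Proof.
rewrite le_eqVlt => /predU1P[<-|x_gt0] y_gt0; first by rewrite mul0r subr0 ltW.
have yx_gt0 : 0 < y / x by rewrite divr_gt0.
have := @le_ln1Dx R (y / x - 1); rewrite [1 + _]addrC subrK => /(_ ltac:(lra)).
move=> /(ler_wpM2l (ltW x_gt0)); rewrite mulrBr mulr1 mulrCA divff ?mulr1 //.
by rewrite gt_eqF.
Qed.

Lemma xlogbE (a b : nat) : xlogb R a b = a%:R * ln (b%:R / a%:R) / ln 2.
Proof. by rewrite /xlogb /log2; case: eqP => [->|_]; rewrite ?mul0r ?mulrA. Qed.

Lemma sum_xlogb_le (I : finType) (a : I -> nat) (N : nat) :
  (forall i, a i <= N)%N ->
  \sum_i (xlogb R (a i) N + xlogb R (N - a i) N)
    <= \sum_i xlogb R (a i) (\sum_j a j) + N%:R / ln 2.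
Proof.
move=> aN; set m := (\sum_j a j)%N.
pose f (p q : nat) : R := p%:R * ln (q%:R / p%:R).
under eq_bigr => i _ do rewrite !xlogbE -/(f _ _) -/(f _ _) -mulrDl.
under [X in _ <= X + _]eq_bigr => i _ do rewrite xlogbE -/(f _ _).
rewrite -!mulr_suml -mulrDl ler_pM2r ?invr_gt0 ?ln2_gt0 //.
have f0 q : f 0%N q = 0 by rewrite /f mul0r.
have [N0|N_gt0] := posnP N.
  have a0 i : a i = 0%N by apply/eqP; rewrite -leqn0 -N0.
  by rewrite !big1 ?addr0 // => i _; rewrite a0 ?N0 f0 ?addr0.
have split_ratio i : f (a i) N = f (a i) m + (a i)%:R * ln (N%:R / m%:R).
  rewrite /f -mulrDr; have [->|ai_gt0] := posnP (a i); first by rewrite !mul0r.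
  have m_gt0 : (0 < m)%N by rewrite /m (bigD1 i) //= ltn_addr.
  rewrite -lnM ?posrE ?divr_gt0 ?ltr0n //; congr (_ * ln _).
  by rewrite [RHS]mulrC mulrA divfK // pnatr_eq0 -lt0n.
have compl_le i : f (N - a i)%N N <= (a i)%:R.
  apply: le_trans (mul_ln_div_le _ _) _; rewrite ?ler0n ?ltr0n //.
  by rewrite natrB // opprB addrC subrK.
under eq_bigr => i _ do rewrite split_ratio -addrA.
rewrite big_split /= lerD2l big_split /= -mulr_suml -natr_sum -/m.
have : m%:R * ln (N%:R / m%:R) <= N%:R - m%:R :> R by rewrite mul_ln_div_le ?ltr0n.
have : \sum_i f (N - a i)%N N <= m%:R by rewrite natr_sum; apply: ler_sum => i _.
lra.
Qed.

End Logarithm.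

Lemma count_mem_filter_enum (T : finType) (p : pred T) (x : T) :
  count_mem x [seq y <- enum T | p y] = p x.
Proof.
rewrite count_uniq_mem; last exact: filter_uniq (enum_uniq T).
by rewrite mem_filter mem_enum andbT.
Qed.

Lemma size_sum_count_mem (T : finType) (s : seq T) : size s = (\sum_x count_mem x s)%N.
Proof.
elim: s => [|y s IHs] /=; first by rewrite big1.
by rewrite big_split /= -IHs (bigD1 y) //= eqxx big1 // => x; rewrite eq_sym => /negbTE ->.
Qed.

Section TrieCounts.
Variables (Sigma : finType) (T : trie Sigma) (k : nat).
Local Notation n := (size (nodes T)).

Lemma size_nodes_gt0 : (0 < n)%N.
Proof. by have := root_in T; case: (nodes T). Qed.

Lemma n_wc_le w c : (n_wc T k w c <= n_w T k w)%N.
Proof. by apply: sub_count => u /andP[]. Qed.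

Lemma count_cover w c : count_mem c (cover T k w) = n_wc T k w c.
Proof.
rewrite /cover count_flatten -map_comp (eq_map (fun u => count_mem_filter_enum (out_has T u) c)).
by rewrite sumn_count count_filter; apply: eq_count => u /=; rewrite andbC.
Qed.

Lemma size_cover w : size (cover T k w) = (\sum_c n_wc T k w c)%N.
Proof. by rewrite size_sum_count_mem; apply: eq_bigr => c _; rewrite count_cover. Qed.

Lemma sum_n_w : (\sum_(w <- contexts T k) n_w T k w)%N = n.
Proof.
have := perm_size (perm_count_undup (map (ctx k) (nodes T))).
rewrite size_flatten /shape -map_comp sumnE big_map size_map => <-.
by apply: eq_bigr => w _; rewrite /= size_nseq count_map.
Qed.

Lemma n_wc_single_node w c : n = 1%N -> n_wc T k w c = 0%N.
Proof.
move=> n1; have nodesE : nodes T = [:: [::]].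
  by move: n1 (root_in T); case: (nodes T) => [|u [|]] //= _; rewrite inE => /eqP ->.
by rewrite /n_wc /out_has nodesE /= inE andbF.
Qed.

End TrieCounts.

Lemma mulr_size_H0 (R : realType) (Sigma : finType) (X : seq Sigma) :
  (size X)%:R * H0 R X = \sum_c xlogb R (count_mem c X) (size X).
Proof.
rewrite /H0; case: eqP => [/size0nil ->|/eqP X_neq0].
  by rewrite mulr0 big1 // => c _; rewrite /xlogb eqxx.
rewrite mulr_sumr; apply: eq_bigr => c _.
by rewrite mulrCA divff ?mulr1 ?pnatr_eq0.
Qed.

Section TrieEntropies.
Variables (R : realType) (Sigma : finType) (T : trie Sigma) (k : nat).
Local Notation n := (size (nodes T)).

Lemma mul_Hk : n%:R * Hk R T k = \sum_(w <- contexts T k) \sum_c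
  (xlogb R (n_wc T k w c) (n_w T k w) + xlogb R (n_w T k w - n_wc T k w c) (n_w T k w)).
Proof.
have n_neq0 : n%:R != 0 :> R by rewrite pnatr_eq0 -lt0n size_nodes_gt0.
rewrite /Hk mulr_sumr; apply: eq_bigr => w _.
by rewrite mulr_sumr; apply: eq_bigr => c _; rewrite -mulrDl mulrCA divff ?mulr1.
Qed.

Lemma mul_Hlabel : n.-1%:R * Hlabel R T k = \sum_(w <- contexts T k) \sum_c
  xlogb R (n_wc T k w c) (\sum_c' n_wc T k w c').
Proof.
rewrite /Hlabel; have [n1|n1_gt0] := posnP n.-1.
  have n_eq1 : n = 1%N by rewrite -(prednK (size_nodes_gt0 T)) n1.
  rewrite n1 mul0r; symmetry; apply: big1 => w _; apply: big1 => c _.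
  by rewrite n_wc_single_node // /xlogb eqxx.
rewrite mulrC divfK ?pnatr_eq0 -?lt0n //; apply: eq_bigr => w _.
by rewrite mulr_size_H0 size_cover; apply: eq_bigr => c _; rewrite count_cover.
Qed.

End TrieEntropies.

Theorem corollary3 (R : realType) (Sigma : finType) (T : trie Sigma) (k : nat) :
  (size (nodes T))%:R * Hk R T k
  <= ((size (nodes T)).-1)%:R * Hlabel R T k + (1443%:R / 1000%:R) * (size (nodes T))%:R.
Proof.
rewrite mul_Hk mul_Hlabel.
apply: (@le_trans _ _ (\sum_(w <- contexts T k)
  (\sum_c xlogb R (n_wc T k w c) (\sum_c' n_wc T k w c') + (n_w T k w)%:R / ln 2))).
  by apply: ler_sum => w _; apply/sum_xlogb_le/n_wc_le.
rewrite big_split /= lerD2l -mulr_suml -natr_sum sum_n_w mulrC.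
by apply: ler_wpM2r => //; apply: invr_ln2_le.
Qed.
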